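(* Let $\sim$ denote either $\cong$ or $\simeq$. A type expression $A$ is a $\top$-variant if and only if $A\sim\top$.
   Context: Type expressions: fix a countably infinite set of type variables $X,Y,Z,\dots$. Pseudo type expressions are generated by $A::=X\mid A\to A\mid \bullet A\mid \mu X.A$ ($\mu$ binds $X$; $\alpha$-convertible expressions are identified; $\to$ associates to the right; $\bullet$ binds tighter than $\to$, which binds tighter than $\mu$). $A[B/X]$ denotes capture-avoiding substitution. $\top$ abbreviates $\mu X.\bullet X$, and $\bullet^n A$ denotes $A$ prefixed by $n$ copies of $\bullet$. The tail $t(A)$ is defined by $t(X)=X$, $t(A\to B)=t(B)$, $t(\bullet A)=\bullet t(A)$, $t(\mu X.A)=\mu X.t(A)$; it always has the form $\bullet^{m_0}\mu X_1.\bullet^{m_1}\mu X_2.\cdots\mu X_n.\bullet^{m_n}Y$. $A$ is a $\top$-variant iff $Y=X_i$ for some $1\le i\le n$ with $X_i\notin\{X_{i+1},\dots,X_n\}$ and $m_i+\dots+m_n\ge 1$. $A$ is proper in $X$ iff: a variable $Y$ is proper in $X$ iff $Y\neq X$; $\bullet A$ is always proper in $X$; $A\to B$ is proper in $X$ iff both $A,B$ are proper in $X$ or $B$ is a $\top$-variant; for $Y\ne X$, $\mu Y.A$ is proper in $X$ iff $A$ is proper in $X$ or $\mu Y.A$ is a $\top$-variant. Type expressions are the least set of pseudo type expressions containing all type variables, closed under $\to$ and $\bullet$, and containing $\mu X.A$ whenever it contains $A$ and $A$ is proper in $X$. Equality: $\cong$ is the least relation on type expressions such that: $A\cong A$; $A\cong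 B$ implies $B\cong A$; $A\cong B$ and $B\cong C$ imply $A\cong C$; $A\cong B$ implies $\bullet A\cong\bullet B$; $A\cong C$ and $B\cong D$ imply $A\to B\cong C\to D$; $A\to\top\cong\top$; $\mu X.A\cong A[\mu X.A/X]$; and if $A\cong C[A/X]$ with $C$ proper in $X$, then $A\cong\mu X.C$. $\simeq$ is the least relation satisfying the same closure conditions and additionally $\bullet(A\to B)\simeq\bullet A\to\bullet B$. *)

(* Type expressions are represented with de Bruijn indices,
   so alpha-convertible expressions are literally identified.  A type
   variable is a natural number (index); under a [TMu] binder index 0
   refers to the bound variable. *)
From Stdlib Require Import List Arith.
Import ListNotations.

Inductive ty : Type :=
| TVar   : nat -> ty
| TArr   : ty -> ty -> ty
| TLater : ty -> ty
| TMu    : ty -> ty.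

Definition top : ty := TMu (TLater (TVar 0)).

Fixpoint later_n (n : nat) (A : ty) : ty :=
  match n with 0 => A | S k => TLater (later_n k A) end.

Fixpoint lift (c : nat) (A : ty) : ty :=
  match A with
  | TVar n => if n <? c then TVar n else TVar (S n)
  | TArr A B => TArr (lift c A) (lift c B)
  | TLater A => TLater (lift c A)
  | TMu A => TMu (lift (S c) A)
  end.

Fixpoint subst (k : nat) (s : ty) (A : ty) : ty :=
  match A with
  | TVar n => if n <? k then TVar n
              else if n =? k then s else TVar (pred n)
  | TArr A B => TArr (subst k s A) (subst k s B)
  | TLater A => TLater (subst k s A)
  | TMu A => TMu (subst (S k) (lift 0 s) A)
  end.

(* A[B/X] where X is the variable bound by the enclosing mu of body A *)
Definition subst0 (A B : ty) : ty := subst 0 B A.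

Fixpoint tail (A : ty) : ty :=
  match A with
  | TVar n => TVar n
  | TArr _ B => tail B
  | TLater A => TLater (tail A)
  | TMu A => TMu (tail A)
  end.

(* On a tail  bullet^{m0} mu X1. bullet^{m1} ... mu Xn. bullet^{mn} Y :
   [env] records, for each enclosing mu (innermost first), whether a
   bullet occurred between that binder and the current position.
   The variable Y = X_i with X_i not among X_{i+1..n} is exactly the de Bruijn
   occurrence bound by binder i, and m_i + ... + m_n >= 1 means a bullet
   occurs after that binder. *)
Fixpoint topvar_aux (env : list bool) (A : ty) : bool :=
  match A with
  | TVar k => nth k env false
  | TArr _ _ => false
  | TLater A => topvar_aux (map (fun _ => true) env) A
  | TMu A => topvar_aux (false :: env) A
  end.

Definition top_variant (A : ty) : bool := topvar_aux [] (tail A).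

Fixpoint proper (x : nat) (A : ty) : bool :=
  match A with
  | TVar y => negb (y =? x)
  | TLater _ => true
  | TArr A B => (proper x A && proper x B) || top_variant B
  | TMu A => proper (S x) A || top_variant (TMu A)
  end.

Fixpoint wf (A : ty) : bool :=
  match A with
  | TVar _ => true
  | TArr A B => wf A && wf B
  | TLater A => wf A
  | TMu A => wf A && proper 0 A
  end.

Inductive ty_eq : ty -> ty -> Prop :=
| teq_refl A : wf A = true -> ty_eq A A
| teq_sym A B : ty_eq A B -> ty_eq B A
| teq_trans A B C : ty_eq A B -> ty_eq B C -> ty_eq A C
| teq_later A B : ty_eq A B -> ty_eq (TLater A) (TLater B)
| teq_arr A B C D : ty_eq A C -> ty_eq B D -> ty_eq (TArr A B) (TArr C D)
| teq_arrtop A : wf A = true -> ty_eq (TArr A top) top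
| teq_unfold A : wf (TMu A) = true -> wf (subst0 A (TMu A)) = true ->
    ty_eq (TMu A) (subst0 A (TMu A))
| teq_fold A C : wf A = true -> wf (TMu C) = true ->
    ty_eq A (subst0 C A) -> ty_eq A (TMu C).

Inductive ty_eqd : ty -> ty -> Prop :=
| teqd_refl A : wf A = true -> ty_eqd A A
| teqd_sym A B : ty_eqd A B -> ty_eqd B A
| teqd_trans A B C : ty_eqd A B -> ty_eqd B C -> ty_eqd A C
| teqd_later A B : ty_eqd A B -> ty_eqd (TLater A) (TLater B)
| teqd_arr A B C D : ty_eqd A C -> ty_eqd B D -> ty_eqd (TArr A B) (TArr C D)
| teqd_arrtop A : wf A = true -> ty_eqd (TArr A top) top
| teqd_unfold A : wf (TMu A) = true -> wf (subst0 A (TMu A)) = true ->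
    ty_eqd (TMu A) (subst0 A (TMu A))
| teqd_fold A C : wf A = true -> wf (TMu C) = true ->
    ty_eqd A (subst0 C A) -> ty_eqd A (TMu C)
| teqd_dist A B : wf A = true -> wf B = true ->
    ty_eqd (TLater (TArr A B)) (TArr (TLater A) (TLater B)).

(* Read modulo the equations, the tail of a type expression is either [top]
   or [bullet^n X] for a free variable [X]; call this its shape.  The shape is
   compositional: [mu X] turns [bullet^n X] into [top], since for a proper body
   [n >= 1].  It is preserved by unfolding (a substitution), by folding
   (properness excludes the self-referential case), by [A -> top = top] and by
   distribution of [bullet], so equality with [top] forces shape [top].  The
   top-variants are exactly the expressions of shape [top], and conversely an
   expression of shape [top] is shown equal to [top] by structural induction,
   generalised to simultaneously substituting [top] for some variables and
   renaming the others, which is what the [mu] case needs. *)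
From Pilot Require Import Defs.
From Stdlib Require Import List Arith Lia Bool.

Inductive shape := ShTop | ShVar (n x : nat).

Definition shape_later (v : shape) : shape :=
  match v with ShTop => ShTop | ShVar n x => ShVar (S n) x end.

(* [ShVar 0 0] would be the body of [mu X. X]; properness rules it out. *)
Definition shape_mu (v : shape) : shape :=
  match v with
  | ShTop | ShVar _ 0 => ShTop
  | ShVar n (S x) => ShVar n x
  end.

Fixpoint tshape (A : ty) : shape :=
  match A with
  | TVar x => ShVar 0 x
  | TArr _ B => tshape B
  | TLater A => shape_later (tshape A)
  | TMu A => shape_mu (tshape A)
  end.

Definition shape_lift (c : nat) (v : shape) : shape :=
  match v with
  | ShTop => ShTop
  | ShVar n x => ShVar n (if x <? c then x else S x)
  end.

Definition shape_subst (k : nat) (w v : shape) : shape :=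
  match v with
  | ShTop => ShTop
  | ShVar n x =>
      if x <? k then ShVar n x
      else if x =? k then
        match w with ShTop => ShTop | ShVar m y => ShVar (n + m) y end
      else ShVar n (pred x)
  end.

Ltac case_nat_cmp :=
  repeat match goal with
  | |- context [?a <? ?b] => destruct (Nat.ltb_spec a b)
  | |- context [?a =? ?b] => destruct (Nat.eqb_spec a b)
  end.

Lemma tshape_lift A c : tshape (lift c A) = shape_lift c (tshape A).
Proof.
  revert c; induction A; intros c; simpl.
  - case_nat_cmp; reflexivity.
  - auto.
  - rewrite IHA; destruct (tshape A); reflexivity.
  - rewrite IHA; destruct (tshape A) as [|n [|x]]; simpl; auto.
    case_nat_cmp; simpl; try lia; reflexivity.
Qed.

Lemma tshape_subst A k s :
  tshape (subst k s A) = shape_subst k (tshape s) (tshape A).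
Proof.
  revert k s; induction A; intros k s; simpl.
  - case_nat_cmp; simpl; try reflexivity.
    destruct (tshape s); reflexivity.
  - auto.
  - rewrite IHA; destruct (tshape A) as [|n x]; simpl; auto.
    case_nat_cmp; simpl; try reflexivity.
    destruct (tshape s); reflexivity.
  - rewrite IHA, tshape_lift; destruct (tshape A) as [|n [|x]]; simpl; auto.
    case_nat_cmp; simpl; try lia.
    + reflexivity.
    + destruct (tshape s); reflexivity.
    + destruct x; [lia | reflexivity].
Qed.

Lemma tshape_unfold A : tshape (subst0 A (TMu A)) = tshape (TMu A).
Proof.
  unfold subst0; rewrite tshape_subst; simpl.
  destruct (tshape A) as [|n [|x]]; reflexivity.
Qed.

(* The value of [topvar_aux env] on a tail of the given shape. *)
Definition shape_holds (env : list bool) (v : shape) : bool :=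
  match v with
  | ShTop => true
  | ShVar 0 x => nth x env false
  | ShVar (S _) x => x <? length env
  end.

Lemma nth_map_const_true (env : list bool) x :
  nth x (map (fun _ => true) env) false = (x <? length env).
Proof. revert x; induction env; intros [|x]; simpl; auto. Qed.

Lemma shape_holds_later env v :
  shape_holds (map (fun _ => true) env) v = shape_holds env (shape_later v).
Proof.
  destruct v as [|[|n] x]; simpl; rewrite ?length_map; auto.
  apply nth_map_const_true.
Qed.

Lemma topvar_aux_tail_holds env A :
  topvar_aux env (Defs.tail A) = true -> shape_holds env (tshape A) = true.
Proof.
  revert env; induction A; intros env H; simpl in *; auto.
  - rewrite <- shape_holds_later; auto.
  - specialize (IHA _ H).
    destruct (tshape A) as [|[|n] [|x]]; simpl in *; auto.
Qed.

Lemma top_variant_tshape A : top_variant A = true -> tshape A = ShTop.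
Proof.
  intros H; apply topvar_aux_tail_holds in H.
  destruct (tshape A) as [|[|n] x]; simpl in H; auto.
  - destruct x; discriminate.
  - apply Nat.ltb_lt in H; simpl in H; lia.
Qed.

Lemma proper_tshape x C : proper x C = true -> tshape C <> ShVar 0 x.
Proof.
  revert x; induction C; intros x H; simpl in *.
  - intros E; injection E as ->; rewrite Nat.eqb_refl in H; discriminate.
  - apply orb_true_iff in H as [H | H].
    + apply andb_prop in H; apply IHC2; tauto.
    + rewrite (top_variant_tshape _ H); discriminate.
  - destruct (tshape C); discriminate.
  - apply orb_true_iff in H as [H | H].
    + specialize (IHC _ H).
      destruct (tshape C) as [|n [|y]]; simpl; try discriminate.
      intros E; injection E as -> ->; auto.
    + pose proof (top_variant_tshape _ H) as E; simpl in E.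
      rewrite E; discriminate.
Qed.

Lemma topvar_aux_tail env A :
  wf A = true -> topvar_aux env (Defs.tail A) = shape_holds env (tshape A).
Proof.
  revert env; induction A; intros env W; simpl in *; auto.
  - apply andb_prop in W; apply IHA2; tauto.
  - rewrite IHA by exact W; apply shape_holds_later.
  - apply andb_prop in W as [W HP].
    pose proof (proper_tshape _ _ HP) as Hne.
    rewrite IHA by exact W.
    destruct (tshape A) as [|[|n] [|x]]; simpl; auto.
Qed.

Lemma top_variant_iff_tshape A :
  wf A = true -> top_variant A = true <-> tshape A = ShTop.
Proof.
  intros W; split; [apply top_variant_tshape |].
  intros E; unfold top_variant; rewrite topvar_aux_tail, E; auto.
Qed.

Lemma ty_eq_ty_eqd A B : ty_eq A B -> ty_eqd A B.
Proof. intros H; induction H; eauto using ty_eqd. Qed.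

Lemma tshape_fold A C :
  proper 0 C = true -> tshape A = tshape (subst0 C A) -> tshape A = tshape (TMu C).
Proof.
  intros HP E; pose proof (proper_tshape _ _ HP) as Hne.
  unfold subst0 in E; rewrite tshape_subst in E; simpl.
  destruct (tshape C) as [|[|n] [|x]]; simpl in *; auto.
  - exfalso; auto.
  - destruct (tshape A); auto.
    injection E; lia.
Qed.

Lemma ty_eqd_tshape A B : ty_eqd A B -> tshape A = tshape B.
Proof.
  intros H; induction H; simpl; try congruence.
  - symmetry; apply tshape_unfold.
  - simpl in H0; apply andb_prop in H0 as [_ HP].
    exact (tshape_fold _ _ HP IHty_eqd).
Qed.

Definition up (s : nat -> option nat) (x : nat) : option nat :=
  match x with 0 => Some 0 | S y => option_map S (s y) end.

Fixpoint psub (s : nat -> option nat) (A : ty) : ty :=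
  match A with
  | TVar x => match s x with None => top | Some y => TVar y end
  | TArr A B => TArr (psub s A) (psub s B)
  | TLater A => TLater (psub s A)
  | TMu A => TMu (psub (up s) A)
  end.

Definition shape_psub (s : nat -> option nat) (v : shape) : shape :=
  match v with
  | ShTop => ShTop
  | ShVar n x => match s x with None => ShTop | Some y => ShVar n y end
  end.

Lemma tshape_psub A s : tshape (psub s A) = shape_psub s (tshape A).
Proof.
  revert s; induction A; intros s; simpl.
  - destruct (s n); reflexivity.
  - auto.
  - rewrite IHA; destruct (tshape A) as [|n x]; simpl; auto.
    destruct (s x); reflexivity.
  - rewrite IHA; destruct (tshape A) as [|n [|x]]; simpl; auto.
    destruct (s x); reflexivity.
Qed.

Lemma psub_id A s : (forall x, s x = Some x) -> psub s A = A.
Proof.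
  revert s; induction A; intros s H; simpl.
  - rewrite H; reflexivity.
  - rewrite IHA1, IHA2; auto.
  - rewrite IHA; auto.
  - rewrite IHA; auto.
    intros [|x]; simpl; auto; rewrite H; reflexivity.
Qed.

Lemma subst_top_psub B k s t :
  (forall x, t x = match s x with
                   | None => None
                   | Some z => if z <? k then Some z
                               else if z =? k then None else Some (pred z)
                   end) ->
  subst k top (psub s B) = psub t B.
Proof.
  revert k s t; induction B; intros k s t H; simpl.
  - rewrite H; destruct (s n) as [z|]; simpl; [case_nat_cmp |]; reflexivity.
  - rewrite (IHB1 k s t), (IHB2 k s t); auto.
  - rewrite (IHB k s t); auto.
  - f_equal; apply IHB; intros [|x]; simpl; [reflexivity |].
    rewrite H; destruct (s x) as [z|]; simpl; auto.
    case_nat_cmp; simpl; try lia; auto.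
    destruct z; [lia | reflexivity].
Qed.

Lemma top_variant_psub B s :
  wf (psub s B) = true -> top_variant B = true -> top_variant (psub s B) = true.
Proof.
  intros W H; apply top_variant_iff_tshape; auto.
  rewrite tshape_psub, (top_variant_tshape _ H); reflexivity.
Qed.

Lemma proper_psub A s x' x :
  wf (psub s A) = true -> s x' = Some x ->
  (forall y, y <> x' -> s y <> Some x) ->
  proper x' A = true -> proper x (psub s A) = true.
Proof.
  revert s x' x; induction A; intros s x' x W E Einj Hp; simpl in *.
  - destruct (s n) as [z|] eqn:Es; [| reflexivity].
    apply negb_true_iff, Nat.eqb_neq in Hp.
    apply negb_true_iff, Nat.eqb_neq; intros ->; exact (Einj n Hp Es).
  - apply andb_prop in W as [W1 W2].
    apply orb_true_iff in Hp as [Hp | Hp]; apply orb_true_iff.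
    + apply andb_prop in Hp as [Hp1 Hp2].
      left; rewrite (IHA1 s x' x), (IHA2 s x' x); auto.
    + right; apply top_variant_psub; auto.
  - reflexivity.
  - apply orb_true_iff in Hp as [Hp | Hp]; apply orb_true_iff.
    + apply andb_prop in W as [W _].
      left; apply (IHA (up s) (S x')); auto.
      * simpl; rewrite E; reflexivity.
      * intros [|y] Hy; simpl; [discriminate |].
        destruct (s y) as [z|] eqn:Ez; simpl; [| discriminate].
        intros Eq; injection Eq as ->; apply (Einj y); auto.
    + right; exact (top_variant_psub (TMu A) s W Hp).
Qed.

Lemma wf_psub A s : wf A = true -> wf (psub s A) = true.
Proof.
  revert s; induction A; intros s W; simpl in *.
  - destruct (s n); reflexivity.
  - apply andb_prop in W as [W1 W2]; rewrite IHA1, IHA2; auto.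
  - auto.
  - apply andb_prop in W as [W HP].
    assert (Wb : wf (psub (up s) A) = true) by auto.
    rewrite Wb; simpl; apply (proper_psub A (up s) 0 0); auto.
    intros [|y] Hy; simpl; [lia |].
    destruct (s y); discriminate.
Qed.

Lemma later_top : ty_eq (TLater top) top.
Proof. apply teq_sym; exact (teq_unfold (TLater (TVar 0)) eq_refl eq_refl). Qed.

Lemma ty_eq_top_psub A s :
  wf A = true -> shape_psub s (tshape A) = ShTop -> ty_eq (psub s A) top.
Proof.
  revert s; induction A; intros s W H; simpl in *.
  - destruct (s n); [discriminate |]; apply teq_refl; reflexivity.
  - apply andb_prop in W as [W1 W2].
    apply teq_trans with (TArr (psub s A1) top).
    + apply teq_arr; [apply teq_refl, wf_psub |]; auto.
    + apply teq_arrtop, wf_psub; auto.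
  - apply teq_trans with (TLater top); [| apply later_top].
    apply teq_later, IHA; auto.
    destruct (tshape A) as [|n x]; simpl in *; auto.
    destruct (s x); auto; discriminate.
  - pose proof (wf_psub (TMu A) s W) as Wmu; simpl in Wmu.
    apply andb_prop in W as [W _].
    apply teq_sym, teq_fold; [reflexivity | exact Wmu |].
    unfold subst0.
    rewrite (subst_top_psub A 0 (up s)
               (fun x => match x with 0 => None | S y => s y end)).
    + apply teq_sym, IHA; auto.
      destruct (tshape A) as [|n [|x]]; simpl in *; auto.
    + intros [|x]; simpl; auto; destruct (s x); reflexivity.
Qed.

Lemma ty_eq_top_of_tshape A : wf A = true -> tshape A = ShTop -> ty_eq A top.
Proof.
  intros W E; rewrite <- (psub_id A Some) by reflexivity.
  apply ty_eq_top_psub; auto; rewrite E; reflexivity.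
Qed.

Theorem theorem4 (A : ty) (HA : wf A = true) :
  (top_variant A = true <-> ty_eq A top) /\
  (top_variant A = true <-> ty_eqd A top).
Proof.
  assert (complete : top_variant A = true -> ty_eq A top).
  { intros H; apply ty_eq_top_of_tshape, top_variant_tshape; auto. }
  assert (sound : ty_eqd A top -> top_variant A = true).
  { intros H; apply top_variant_iff_tshape; auto.
    rewrite (ty_eqd_tshape _ _ H); reflexivity. }
  split; split; auto using ty_eq_ty_eqd.
Qed.
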